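(* There exist $c>0$ and $\tilde y>0$ such that for every $y>\tilde y$, $$\Big|\int_{-\infty}^{\infty}\big|\varphi_x(iy)-iy\big|^2\,dx-\min\Big\{1,\frac{\pi}{4y}\Big\}\Big|<\frac{c}{y^3}.$$
   Context: For $x\in\mathbb{R}$ and $z$ in the upper half plane $\mathbb{H}=\{z\in\mathbb{C}:\operatorname{Im} z>0\}$, $\varphi_x(z)=x+\sqrt{(z-x)^2-1}$, using the branch of the square root with positive imaginary part. *)

From Stdlib Require Import Reals ClassicalEpsilon.
From Coquelicot Require Import Coquelicot.
Open Scope R_scope.

(* The branch of the square root with positive imaginary part:
   a w with w^2 = a and Im w > 0 (unique whenever a is not in [0,+oo),
   which is always the case for the arguments used below). *)
Definition psqrt (a : C) : C :=
  epsilon (inhabits (RtoC 0)) (fun w : C => (w * w)%C = a /\ 0 < Im w).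

Definition varphi (x : R) (z : C) : C :=
  (RtoC x + psqrt ((z - RtoC x) * (z - RtoC x) - RtoC 1))%C.

Definition iy (y : R) : C := (0, y).

From Stdlib Require Import Reals Lra Psatz ClassicalEpsilon Classical.
From Coquelicot Require Import Coquelicot.
Open Scope R_scope.

(* Writing r = x^2 + y^2, the square root in [varphi x (iy y)] is the root of
   (x^2 - y^2 - 1) - 2ixy with positive imaginary part, namely -xy/q + iq with
   q = sqrt (y^2 + d), where d > 0 solves d^2 + d (r - 1) = y^2.  Hence
   |varphi_x(iy) - iy|^2 = (x - xy/q)^2 + (q - y)^2 = d^2 (r + d) / ((y^2 + d) (q + y)^2).
   Since d r = y^2 + d - d^2 and d < 4/3 once y >= 2, this equals 1/(4r) up to an
   error of at most 1/(y^2 r).  Integrating against the exact value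
   int dx / (x^2 + y^2) = pi / y gives |I - pi/(4y)| <= pi / y^3, and pi/(4y) < 1. *)

Lemma psqrt_eq (u v p q : R) :
  0 < q -> p * p - q * q = u -> 2 * p * q = v -> psqrt (u, v) = (p, q).
Proof.
  intros Hq Hu Hv. unfold psqrt.
  set (P := fun w : C => (w * w)%C = (u, v) /\ 0 < Im w).
  assert (Hex : exists w, P w).
  { exists (p, q). split; [|simpl; lra].
    unfold Cmult; simpl. f_equal; lra. }
  destruct (epsilon_spec (inhabits (RtoC 0)) P Hex) as [Hw Him].
  destruct (epsilon (inhabits (RtoC 0)) P) as [a b].
  unfold Cmult in Hw; simpl in Hw, Him.
  assert (Ha : a * a - b * b = u) by (apply (f_equal fst) in Hw; simpl in Hw; lra).
  assert (Hb : a * b + b * a = v) by (apply (f_equal snd) in Hw; simpl in Hw; lra).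
  (* With w = a + ib and w0 = p + iq: (w - w0) (w + w0) = w^2 - w0^2 = 0, and
     w + w0 <> 0 since both lie in the upper half plane. *)
  assert (Hprod : ((a - p)^2 + (b - q)^2) * ((a + p)^2 + (b + q)^2) = 0).
  { replace (((a - p)^2 + (b - q)^2) * ((a + p)^2 + (b + q)^2))
      with (((a*a - b*b) - (p*p - q*q))^2 + ((a*b + b*a) - 2*p*q)^2) by ring.
    rewrite Ha, Hb, Hu, Hv. ring. }
  assert (Hsum : 0 < (a + p)^2 + (b + q)^2).
  { pose proof (pow2_ge_0 (a + p)). assert (0 < b + q) by lra. nra. }
  apply Rmult_integral in Hprod as [Hdiff | Hdiff]; [|lra].
  pose proof (pow2_ge_0 (a - p)); pose proof (pow2_ge_0 (b - q)).
  f_equal; nra.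
Qed.

(* [root_im y x] is the imaginary part of the square root in [varphi x (iy y)],
   and [root_excess y x] = (root_im y x)^2 - y^2. *)
Definition root_excess (y x : R) : R :=
  (sqrt ((x^2 + y^2 - 1)^2 + 4 * y^2) - (x^2 + y^2 - 1)) / 2.

Definition root_im (y x : R) : R := sqrt (y^2 + root_excess y x).

Section RootAtIy.

Variables y x : R.
Hypothesis y_pos : 0 < y.

Local Notation r := (x^2 + y^2).
Local Notation d := (root_excess y x).
Local Notation q := (root_im y x).

Lemma root_excess_pos : 0 < d.
Proof.
  unfold root_excess.
  assert (Hlt : x^2 + y^2 - 1 < sqrt ((x^2 + y^2 - 1)^2 + 4 * y^2)).
  { destruct (Rle_or_lt (x^2 + y^2 - 1) 0) as [Hn | Hp].
    - assert (0 < sqrt ((x^2 + y^2 - 1)^2 + 4 * y^2)); [|lra].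
      apply sqrt_lt_R0. pose proof (pow2_ge_0 (x^2 + y^2 - 1)). nra.
    - rewrite <- (sqrt_pow2 (x^2 + y^2 - 1)) at 1 by lra.
      apply sqrt_lt_1_alt. split; nra. }
  lra.
Qed.

Lemma root_excess_eq : d^2 + d * (r - 1) = y^2.
Proof.
  unfold root_excess.
  set (s := sqrt ((x^2 + y^2 - 1)^2 + 4 * y^2)).
  assert (Hs : s^2 = (x^2 + y^2 - 1)^2 + 4 * y^2).
  { apply pow2_sqrt. pose proof (pow2_ge_0 (x^2 + y^2 - 1)). nra. }
  nra.
Qed.

Lemma root_im_pos : 0 < q.
Proof. apply sqrt_lt_R0. pose proof root_excess_pos. nra. Qed.

Lemma root_im_sq : q^2 = y^2 + d.
Proof. apply pow2_sqrt. pose proof root_excess_pos. nra. Qed.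

Lemma varphi_iy_sub_iy : (varphi x (iy y) - iy y)%C = (x - x * y / q, q - y).
Proof.
  pose proof root_im_pos as Hq. pose proof root_im_sq as HQ.
  pose proof root_excess_eq as Hd.
  unfold varphi, iy.
  replace (((0, y) - RtoC x) * ((0, y) - RtoC x) - RtoC 1)%C
    with ((x^2 - y^2 - 1, - 2 * x * y) : C)
    by (unfold Cminus, Cmult, Cplus, Copp, RtoC; simpl; f_equal; ring).
  rewrite (psqrt_eq _ _ (- (x * y) / q) q Hq).
  - unfold Cminus, Cplus, Copp, RtoC; simpl. f_equal; field; lra.
  - apply Rmult_eq_reg_r with (q^2); [|nra].
    field_simplify; [|lra].
    replace (q^4) with ((y^2 + d)^2) by (rewrite <- HQ; ring).
    rewrite HQ. nra.
  - field. lra.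
Qed.

Lemma Cmod_varphi_iy_sub_iy_sq :
  (Cmod (varphi x (iy y) - iy y)%C)^2 = d^2 * (r + d) / ((y^2 + d) * (q + y)^2).
Proof.
  pose proof root_im_pos as Hq. pose proof root_im_sq as HQ.
  pose proof root_excess_pos as Hd. pose proof root_excess_eq as Hd2.
  rewrite varphi_iy_sub_iy. unfold Cmod; cbn [fst snd].
  rewrite pow2_sqrt by (apply Rplus_le_le_0_compat; apply pow2_ge_0).
  assert (Hqy : q - y = d / (q + y)).
  { apply Rmult_eq_reg_r with (q + y); [|lra]. field_simplify; [|lra]. nra. }
  replace (x - x * y / q) with (x * (q - y) / q) by (field; lra).
  rewrite Hqy, <- HQ.
  replace (r + d) with (x^2 + q^2) by (rewrite HQ; ring).
  field. lra.
Qed.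

End RootAtIy.

Lemma continuous_Cmod_varphi_iy_sub_iy_sq (y x : R) : 0 < y ->
  continuous (fun t => (Cmod (varphi t (iy y) - iy y)%C)^2) x.
Proof.
  intros Hy.
  apply continuous_ext with
    (fun t => (t - t * y / root_im y t)^2 + (root_im y t - y)^2).
  { intros t. rewrite (varphi_iy_sub_iy y t Hy). unfold Cmod; cbn [fst snd].
    rewrite pow2_sqrt by (apply Rplus_le_le_0_compat; apply pow2_ge_0); reflexivity. }
  apply (@ex_derive_continuous R_AbsRing R_NormedModule).
  pose proof (root_im_pos y x Hy) as Hq. pose proof (root_excess_pos y x Hy) as Hd.
  assert (H1 : 0 < (x^2 + y^2 - 1)^2 + 4 * y^2)
    by (pose proof (pow2_ge_0 (x^2 + y^2 - 1)); nra).
  assert (H2 : 0 < y^2 + root_excess y x) by nra.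
  assert (H3 : root_im y x <> 0) by lra.
  unfold root_im, root_excess in *.
  auto_derive. repeat split; assumption.
Qed.

Lemma excess_ratio_approx (y r d q : R) :
  2 <= y -> y^2 <= r -> 0 < d -> d^2 + d * (r - 1) = y^2 -> 0 < q -> q^2 = y^2 + d ->
  Rabs (d^2 * (r + d) / ((y^2 + d) * (q + y)^2) - /4 * /r) <= /y^2 * /r.
Proof.
  intros Hy Hr Hd Hd2 Hq HQ.
  assert (Hy2 : 4 <= y^2) by nra.
  assert (Hr0 : 0 < r) by nra.
  assert (Hd_lt : d < 4/3).
  { apply Rnot_le_lt; intros Hge. assert (d * (r - 1) >= 4/3 * (r - 1)) by nra. nra. }
  set (P := d * r).
  assert (HP : P = y^2 + d - d^2) by (unfold P; nra).
  assert (HP_lo : y^2 - 4/9 <= P) by (rewrite HP; nra).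
  assert (HP_hi : P <= y^2 + 1/4) by (rewrite HP; pose proof (pow2_ge_0 (d - 1/2)); nra).
  assert (Hqy : y <= q) by nra.
  set (E := (y^2 + d) * (q + y)^2).
  assert (HE_lo : 4 * y^4 <= E).
  { unfold E. replace (4 * y^4) with (y^2 * (4 * y^2)) by ring.
    apply Rmult_le_compat; nra. }
  assert (HE_hi : E <= (y^2 + d) * (4 * y^2 + 2 * d)).
  { unfold E. apply Rmult_le_compat_l; [nra|]. pose proof (pow2_ge_0 (q - y)). nra. }
  (* 4 r times the ratio, minus 1, is (N - E) / E, where N = 4 P^2 + 4 P d^2 and E
     are both 4 y^4 + O(y^2). *)
  set (N := 4 * r * d^2 * (r + d)).
  assert (HN : N = 4 * P^2 + 4 * P * d^2) by (unfold N, P; ring).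
  assert (HNE : Rabs (N - E) <= 13 * y^2).
  { apply Rabs_le; split; rewrite HN.
    - assert ((y^2 + d) * (4 * y^2 + 2 * d) <= (y^2 + 4/3) * (4 * y^2 + 8/3))
        by (apply Rmult_le_compat; nra).
      assert ((y^2 - 4/9)^2 <= P^2) by nra.
      assert (0 <= P * d^2) by (apply Rmult_le_pos; nra).
      nra.
    - assert (P^2 <= (y^2 + 1/4)^2) by nra.
      assert (P * d^2 <= (y^2 + 1/4) * (16/9)) by (apply Rmult_le_compat; nra).
      nra. }
  assert (HE0 : 0 < E) by nra.
  replace (d^2 * (r + d) / E - /4 * /r) with ((N - E) / (4 * r * E))
    by (unfold N; field; split; lra).
  unfold Rdiv. rewrite Rabs_mult, (Rabs_pos_eq (/ (4 * r * E)))
    by (apply Rlt_le, Rinv_0_lt_compat; nra).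
  apply Rle_trans with (13 * y^2 * / (4 * r * (4 * y^4))).
  - apply Rmult_le_compat; [apply Rabs_pos | apply Rlt_le, Rinv_0_lt_compat; nra | exact HNE |].
    apply Rinv_le_contravar; nra.
  - replace (13 * y^2 * / (4 * r * (4 * y^4))) with (13/16 * / (y^2 * r)) by (field; nra).
    rewrite Rinv_mult.
    assert (0 < / y^2 * / r) by (apply Rmult_lt_0_compat; apply Rinv_0_lt_compat; nra).
    lra.
Qed.

Lemma Cmod_varphi_iy_sub_iy_sq_approx (y x : R) : 2 <= y ->
  Rabs ((Cmod (varphi x (iy y) - iy y)%C)^2 - /4 * /(x^2 + y^2)) <= /y^2 * /(x^2 + y^2).
Proof.
  intros Hy.
  assert (Hy0 : 0 < y) by lra.
  rewrite (Cmod_varphi_iy_sub_iy_sq y x Hy0).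
  pose proof (pow2_ge_0 x).
  apply excess_ratio_approx; try lra.
  - apply root_excess_pos; lra.
  - apply root_excess_eq.
  - apply root_im_pos; lra.
  - apply root_im_sq; lra.
Qed.

Lemma is_lim_atan_p_infty : is_lim atan p_infty (PI / 2).
Proof.
  intros P [eps HP].
  set (e := Rmin eps (PI / 2)).
  assert (He : 0 < e) by (apply Rmin_pos; [apply cond_pos | pose proof PI_RGT_0; lra]).
  assert (He_eps : e <= eps) by apply Rmin_l.
  assert (He_pi : e <= PI / 2) by apply Rmin_r.
  exists (tan (PI / 2 - e)); intros x Hx; apply HP.
  apply atan_increasing in Hx; rewrite atan_tan in Hx by lra.
  pose proof (atan_bound x).
  change (Rabs (atan x - PI / 2) < eps); rewrite Rabs_left; lra.
Qed.

Lemma is_lim_atan_m_infty : is_lim atan m_infty (- (PI / 2)).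
Proof.
  apply (is_lim_ext (fun x => - atan (- x))); [intros; rewrite atan_opp; ring|].
  apply (is_lim_opp _ m_infty (PI / 2)).
  apply (is_lim_comp atan (fun x => - x) m_infty (PI / 2) p_infty).
  - exact is_lim_atan_p_infty.
  - apply (is_lim_opp (fun x => x) m_infty m_infty), is_lim_id.
  - exists 0; easy.
Qed.

Lemma is_lim_atan_div (y : R) (l : Rbar) (la : R) :
  0 < y -> (l = p_infty \/ l = m_infty) -> is_lim atan l la ->
  is_lim (fun x => atan (x / y) / y) l (la / y).
Proof.
  intros Hy Hl Hatan.
  apply (is_lim_scal_r (fun x => atan (x / y)) (/ y) l la).
  apply (is_lim_comp atan (fun x => x / y) l la l); [exact Hatan | |].
  - rewrite <- (is_Rbar_mult_unique l (/ y) l) at 2.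
    + apply (is_lim_scal_r (fun x => x) (/ y) l l), is_lim_id.
    + assert (Rbar_lt 0 (/ y)) by (apply Rinv_0_lt_compat; lra).
      destruct Hl as [-> | ->];
        [apply is_Rbar_mult_p_infty_pos | apply is_Rbar_mult_m_infty_pos]; easy.
  - destruct Hl as [-> | ->]; exists 0; easy.
Qed.

Lemma is_RInt_gen_antiderivative (f F : R -> R) (la lb : R) :
  (forall a b, is_RInt f a b (F b - F a)) ->
  is_lim F m_infty la -> is_lim F p_infty lb ->
  is_RInt_gen f (Rbar_locally m_infty) (Rbar_locally p_infty) (lb - la).
Proof.
  intros HF Ha Hb P HP.
  assert (Hlim : filterlim (fun ab : R * R => plus (F (snd ab)) (opp (F (fst ab))))
     (filter_prod (Rbar_locally m_infty) (Rbar_locally p_infty)) (locally (plus lb (opp la)))).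
  { apply (filterlim_comp_2 (G := locally lb) (H := locally (opp la))).
    - exact (filterlim_comp _ _ _ snd F _ _ _ filterlim_snd Hb).
    - exact (filterlim_comp _ _ _ (fun ab => F (fst ab)) opp _ _ _
               (filterlim_comp _ _ _ fst F _ _ _ filterlim_fst Ha) (filterlim_opp la)).
    - exact (@filterlim_plus R_AbsRing R_NormedModule lb (opp la)). }
  unfold filtermapi; eapply filter_imp; [|exact (Hlim P HP)]; intros [a b] Hab.
  exists (F b - F a); split; [apply HF | exact Hab].
Qed.

Lemma continuous_inv_sq_add (y x : R) : 0 < y -> continuous (fun t => / (t^2 + y^2)) x.
Proof.
  intros Hy. apply (@ex_derive_continuous R_AbsRing R_NormedModule).
  auto_derive. pose proof (pow2_ge_0 x). nra.
Qed.

Lemma is_RInt_inv_sq_add (y a b : R) : 0 < y ->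
  is_RInt (fun x => / (x^2 + y^2)) a b (atan (b / y) / y - atan (a / y) / y).
Proof.
  intros Hy.
  apply (is_RInt_derive (fun x => atan (x / y) / y)).
  - intros x _. pose proof (pow2_ge_0 x).
    auto_derive; [exact I|]. field. split; nra.
  - intros x _. apply continuous_inv_sq_add; exact Hy.
Qed.

Lemma RInt_inv_sq_add_le (y a b : R) : 0 < y -> RInt (fun x => / (x^2 + y^2)) a b <= PI / y.
Proof.
  intros Hy. rewrite (is_RInt_unique _ _ _ _ (is_RInt_inv_sq_add y a b Hy)).
  pose proof (atan_bound (b / y)). pose proof (atan_bound (a / y)).
  apply Rmult_le_reg_r with y; [lra|]. field_simplify; lra.
Qed.

Lemma is_RInt_gen_inv_sq_add (y : R) : 0 < y ->
  is_RInt_gen (fun x => / (x^2 + y^2)) (Rbar_locally m_infty) (Rbar_locally p_infty) (PI / y).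
Proof.
  intros Hy.
  replace (PI / y) with (PI / 2 / y - - (PI / 2) / y) by (field; lra).
  apply (is_RInt_gen_antiderivative _ (fun x => atan (x / y) / y)).
  - intros a b. apply is_RInt_inv_sq_add; exact Hy.
  - apply is_lim_atan_div; auto using is_lim_atan_m_infty.
  - apply is_lim_atan_div; auto using is_lim_atan_p_infty.
Qed.

Lemma Cmod_varphi_iy_sub_iy_sq_le (y x : R) : 2 <= y ->
  (Cmod (varphi x (iy y) - iy y)%C)^2 <= / (x^2 + y^2).
Proof.
  intros Hy.
  pose proof (Cmod_varphi_iy_sub_iy_sq_approx y x Hy) as Happrox.
  apply Rabs_le_between in Happrox as [_ Happrox].
  assert (Hr : 0 < / (x^2 + y^2)) by (apply Rinv_0_lt_compat; pose proof (pow2_ge_0 x); nra).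
  assert (Hy2 : / y^2 <= / 4) by (apply Rinv_le_contravar; nra).
  assert (/ y^2 * / (x^2 + y^2) <= / 4 * / (x^2 + y^2)) by (apply Rmult_le_compat_r; lra).
  lra.
Qed.

Lemma RInt_nonneg_le_widen (f : R -> R) (a a0 b0 b : R) :
  (forall u v, ex_RInt f u v) -> (forall x, 0 <= f x) ->
  a <= a0 -> a0 <= b0 -> b0 <= b -> RInt f a0 b0 <= RInt f a b.
Proof.
  intros Hex Hf Ha Hab Hb.
  rewrite <- (RInt_Chasles f a b0 b) by auto.
  rewrite <- (RInt_Chasles f a a0 b0) by auto.
  assert (0 <= RInt f a a0) by (apply RInt_ge_0; auto).
  assert (0 <= RInt f b0 b) by (apply RInt_ge_0; auto).
  unfold plus; simpl. lra.
Qed.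

(* The improper integral is the supremum of the integrals over compact intervals. *)
Lemma ex_RInt_gen_nonneg_bounded (f : R -> R) (M : R) :
  (forall a b, ex_RInt f a b) -> (forall x, 0 <= f x) ->
  (forall a b, a <= b -> RInt f a b <= M) ->
  ex_RInt_gen f (Rbar_locally m_infty) (Rbar_locally p_infty).
Proof.
  intros Hex Hf HM.
  set (S := fun v => exists a b, a <= b /\ v = RInt f a b).
  destruct (completeness S) as [I [Hub Hlub]].
  { exists M. intros v [a [b [Hab ->]]]. auto. }
  { exists (RInt f 0 0), 0, 0. split; [lra | reflexivity]. }
  exists I. intros P [eps HP].
  assert (Hnear : exists a0 b0, a0 <= b0 /\ I - eps < RInt f a0 b0).
  { apply NNPP; intros Hn.
    assert (I <= I - eps); [|pose proof (cond_pos eps); lra].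
    apply Hlub. intros v [a [b [Hab ->]]].
    apply Rnot_lt_le; intros Hlt. apply Hn. exists a, b. auto. }
  destruct Hnear as [a0 [b0 [Hab0 Hnear]]].
  apply Filter_prod with (fun a => a < a0) (fun b => b0 < b); [exists a0 | exists b0 |]; auto.
  intros a b Ha Hb. exists (RInt f a b). split.
  - apply (@RInt_correct R_CompleteNormedModule), Hex.
  - apply HP. change (Rabs (RInt f a b - I) < eps).
    assert (RInt f a b <= I) by (apply Hub; exists a, b; split; [lra | reflexivity]).
    pose proof (RInt_nonneg_le_widen f a a0 b0 b Hex Hf (Rlt_le _ _ Ha) Hab0 (Rlt_le _ _ Hb)).
    rewrite Rabs_left1; lra.
Qed.

Lemma ex_RInt_gen_Cmod_varphi_iy_sub_iy_sq (y : R) : 2 <= y ->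
  ex_RInt_gen (fun x => (Cmod (varphi x (iy y) - iy y)%C)^2)
    (Rbar_locally m_infty) (Rbar_locally p_infty).
Proof.
  intros Hy. assert (Hy0 : 0 < y) by lra.
  assert (Hint : forall a b, ex_RInt (fun x => (Cmod (varphi x (iy y) - iy y)%C)^2) a b).
  { intros a b. apply (@ex_RInt_continuous R_CompleteNormedModule).
    intros x _. apply continuous_Cmod_varphi_iy_sub_iy_sq; exact Hy0. }
  apply ex_RInt_gen_nonneg_bounded with (PI / y); [exact Hint | intros x; apply pow2_ge_0 |].
  intros a b Hab. apply Rle_trans with (RInt (fun x => / (x^2 + y^2)) a b).
  - apply RInt_le; auto.
    + apply (@ex_RInt_continuous R_CompleteNormedModule).
      intros x _. apply continuous_inv_sq_add; exact Hy0.
    + intros x _. apply Cmod_varphi_iy_sub_iy_sq_le; exact Hy.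
  - apply RInt_inv_sq_add_le; exact Hy0.
Qed.

Lemma Rabs_is_RInt_gen_sub_le (f g h : R -> R) (If Ig Ih : R) :
  is_RInt_gen f (Rbar_locally m_infty) (Rbar_locally p_infty) If ->
  is_RInt_gen g (Rbar_locally m_infty) (Rbar_locally p_infty) Ig ->
  is_RInt_gen h (Rbar_locally m_infty) (Rbar_locally p_infty) Ih ->
  (forall x, Rabs (f x - g x) <= h x) -> Rabs (If - Ig) <= Ih.
Proof.
  intros Hf Hg Hh Hfg.
  refine (@RInt_gen_norm R_CompleteNormedModule _ _ _ _ (fun x => f x - g x) h _ _ _ _
           (is_RInt_gen_minus _ _ _ _ Hf Hg) Hh).
  - apply Filter_prod with (fun a => a < 0) (fun b => 0 < b); [exists 0 | exists 0 |]; auto.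
    simpl; intros; lra.
  - apply filter_forall. intros ab x _. apply Hfg.
Qed.

Theorem lemmaA1 :
  exists c : R, 0 < c /\ exists yt : R, 0 < yt /\
    forall y : R, yt < y ->
      exists I : R,
        is_RInt_gen (fun x : R => (Cmod (varphi x (iy y) - iy y)%C) ^ 2)
          (Rbar_locally m_infty) (Rbar_locally p_infty) I /\
        Rabs (I - Rmin 1 (PI / (4 * y))) < c / y ^ 3.
Proof.
  exists 5; split; [lra|]. exists 2; split; [lra|]. intros y Hy.
  assert (Hy0 : 0 < y) by lra.
  destruct (ex_RInt_gen_Cmod_varphi_iy_sub_iy_sq y (Rlt_le _ _ Hy)) as [I HI].
  exists I; split; [exact HI|].
  assert (Hdiff : Rabs (I - / 4 * (PI / y)) <= / y^2 * (PI / y)).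
  { apply (Rabs_is_RInt_gen_sub_le (fun x => (Cmod (varphi x (iy y) - iy y)%C)^2)
             (fun x => / 4 * / (x^2 + y^2)) (fun x => / y^2 * / (x^2 + y^2)));
      [exact HI | | |].
    - exact (is_RInt_gen_scal _ (/ 4) _ (is_RInt_gen_inv_sq_add y Hy0)).
    - exact (is_RInt_gen_scal _ (/ y^2) _ (is_RInt_gen_inv_sq_add y Hy0)).
    - intros x. apply Cmod_varphi_iy_sub_iy_sq_approx; lra. }
  pose proof PI_4. pose proof PI_RGT_0.
  rewrite Rmin_right by (apply Rmult_le_reg_r with (4 * y); [lra|]; field_simplify; lra).
  replace (PI / (4 * y)) with (/ 4 * (PI / y)) by (field; lra).
  replace (/ y^2 * (PI / y)) with (PI / y^3) in Hdiff by (field; lra).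
  apply Rle_lt_trans with (PI / y^3); [exact Hdiff|].
  apply Rmult_lt_compat_r; [apply Rinv_0_lt_compat; nra | lra].
Qed.
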